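(* Let $P$ be a finite poset, $\epsilon\in\{1,-1\}$, $\xi\in S^{(\epsilon)}$ and $d=\xi(-\infty)$. Then $T^\xi$ is not a generator of $\omega^{(\epsilon)}$ if and only if there is an antichain $A$ of $P$ (possibly empty) such that for every $C\in C_\xi^{[d-\epsilon]}$ we have $C\cap A\neq\emptyset$ and $\xi(a)>\epsilon$ for the unique element $a\in C\cap A$ (the condition holds trivially when $C_\xi^{[d-\epsilon]}=\emptyset$).
   Context: $P^-=P\cup\{-\infty\}$; $\xi^+(B)=\sum_{b\in B}\xi(b)$. $S^{(m)}=\{\xi\in\mathbb Z^{P^-}:\xi(x)\ge m\ \forall x\in P,\ \xi(-\infty)\ge\xi^+(C)+m$ for every maximal chain $C$ of $P\}$. $C_\xi^{[m]}$ is the set of maximal chains $C$ of $P$ with $\xi^+(C)=m$. $T^\xi=\prod_{x\in P^-}T_x^{\xi(x)}$, $\deg T^\xi=\xi(-\infty)$. $R=\mathbb K[\mathcal C(P)]=\bigoplus_{\xi\in S^{(0)}}\mathbb KT^\xi$ is the Ehrhart ring of the chain polytope, $\omega^{(1)}=\omega=\bigoplus_{\xi\in S^{(1)}}\mathbb KT^\xi$ its canonical ideal and $\omega^{(-1)}=R:\omega=\bigoplus_{\xi\in S^{(-1)}}\mathbb KT^\xi$ its anticanonical ideal. A Laurent monomial $T^\xi\in\omega^{(\epsilon)}$ is a generator of $\omega^{(\epsilon)}$ if it belongs to the (unique) minimal monomial generating set of the $R$-module $\omega^{(\epsilon)}$, i.e. it is not of the form $T^{\xi_1}T^{\xi_2}$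 with $\xi_1\in S^{(0)}$, $\xi_1(-\infty)>0$, $\xi_2\in S^{(\epsilon)}$. *)

From HB Require Import structures.
From mathcomp Require Import all_boot all_order all_algebra.
Set Implicit Arguments. Unset Strict Implicit. Unset Printing Implicit Defensive.
Import Order.TTheory GRing.Theory Num.Theory.
Local Open Scope ring_scope.

(* P is a finite poset T : finPOrderType disp.  P^- = P ∪ {-∞} is modelled
   as option T, with None = -∞.  An exponent vector ξ ∈ Z^{P^-} is a
   function xi : option T -> int. *)

Section Poset.
Context {disp : Order.disp_t} {T : finPOrderType disp}.

Definition is_chain (C : {set T}) : Prop :=
  forall x y, x \in C -> y \in C -> (x <= y)%O \/ (y <= x)%O.

Definition is_antichain (A : {set T}) : Prop :=
  forall x y, x \in A -> y \in A -> (x <= y)%O -> x = y.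

Definition is_max_chain (C : {set T}) : Prop :=
  is_chain C /\ forall D : {set T}, is_chain D -> C \subset D -> D = C.

Definition xiplus (xi : option T -> int) (B : {set T}) : int :=
  \sum_(b in B) xi (Some b).

Definition inS (m : int) (xi : option T -> int) : Prop :=
  (forall x : T, m <= xi (Some x)) /\
  (forall C : {set T}, is_max_chain C -> xiplus xi C + m <= xi None).

(* T^xi is a generator of omega^{(eps)}: T^xi ∈ omega^{(eps)} and it is not
   of the form T^{xi1} T^{xi2} = T^{xi1 + xi2} with xi1 ∈ S^{(0)},
   xi1(-∞) > 0, xi2 ∈ S^{(eps)}. *)
Definition is_generator (eps : int) (xi : option T -> int) : Prop :=
  inS eps xi /\
  ~ (exists xi1 xi2 : option T -> int,
        [/\ inS 0 xi1, 0 < xi1 None, inS eps xi2 &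
            forall p, xi p = xi1 p + xi2 p]).

End Poset.

From HB Require Import structures.
From mathcomp Require Import all_boot all_order all_algebra.
From mathcomp Require Import zify.
From Stdlib Require Import Classical.
Set Implicit Arguments. Unset Strict Implicit. Unset Printing Implicit Defensive.
Import Order.TTheory GRing.Theory Num.Theory.
Local Open Scope ring_scope.

(* (=>) Given such a splitting, every maximal chain C that is tight for xi
   (xi^+(C) = xi(-oo) - eps) is also tight for xi1, hence contains a point
   where xi1 is positive.  Take A to be the antichain of minimal elements of
   the support of xi1: the lowest positive point a of a tight chain C lies in
   A, for otherwise replacing the part of C below a by a positive point below
   a would give a chain with xi1^+ > xi1(-oo).  Then xi(a) >= 1 + eps.
   (<=) Given A, subtract from xi the indicator of A' = {a in A | xi(a) > eps}
   (with value 1 at -oo).  Since a chain meets an antichain at most once, the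
   indicator lies in S^(0), and the remainder lies in S^(eps) because every
   tight chain meets A'.
   Neither direction uses eps = 1 or eps = -1: the equivalence holds for
   every integer eps. *)

Section ChainsAndAntichains.
Context {disp : Order.disp_t} {T : finPOrderType disp}.
Implicit Types (A B C D E : {set T}) (f g h : option T -> int).

Definition chainb C : bool :=
  [forall x in C, forall y in C, (x <= y)%O || (y <= x)%O].

Lemma chainbP C : reflect (is_chain C) (chainb C).
Proof.
apply: (iffP forall_inP) => [H x y xC yC | H x xC].
  by have /forall_inP /(_ y yC) /orP := H x xC.
by apply/forall_inP => y yC; apply/orP; apply: H.
Qed.

(* Every chain is contained in a maximal chain: take a largest chain
   containing it. *)
Lemma ext_max_chain D : is_chain D -> exists C, is_max_chain C /\ D \subset C.
Proof.
move=> /chainbP hD.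
have hDD : chainb D && (D \subset D) by rewrite hD subxx.
have [C /andP[hC hDC] hmax] :=
  @arg_maxnP _ D (fun C => chainb C && (D \subset C)) (fun C => #|C|) hDD.
exists C; split=> //; split; first exact/chainbP.
move=> E /chainbP hE hCE; apply/eqP; rewrite eq_sym eqEcard hCE /=.
by apply: hmax; rewrite hE (subset_trans hDC hCE).
Qed.

Lemma chain_antichain_card C A :
  is_chain C -> is_antichain A -> (#|C :&: A| <= 1)%N.
Proof.
move=> hC hA; apply/card_le1_eqP => x y.
rewrite !inE => /andP[xC xA] /andP[yC yA].
by case: (hC x y xC yC) => [/(hA x y xA yA) | /(hA y x yA xA)].
Qed.

Lemma sub_antichain A B : B \subset A -> is_antichain A -> is_antichain B.
Proof. by move=> /subsetP hBA hA x y /hBA xA /hBA yA; apply: hA. Qed.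

Lemma xiplus_add f g h C :
  (forall p, f p = g p + h p) -> xiplus f C = xiplus g C + xiplus h C.
Proof. by move=> H; rewrite /xiplus -big_split /=; apply: eq_bigr. Qed.

Lemma xiplus_sub f D C :
  D \subset C -> (forall x, 0 <= f (Some x)) -> xiplus f D <= xiplus f C.
Proof.
move=> hDC hf; rewrite /xiplus [X in _ <= X](big_setID D) /=.
by rewrite (setIidPr hDC) lerDl sumr_ge0.
Qed.

Definition indicator A (p : option T) : int :=
  if p is Some x then (x \in A)%:R else 1.

Lemma xiplus_indicator A C : xiplus (indicator A) C = #|C :&: A|%:R.
Proof.
rewrite /xiplus /= -natr_sum -sum1dep_card; congr (_%:R).
by rewrite big_mkcondr /=; apply: eq_bigr => x _; case: (x \in A).
Qed.

Lemma indicator_inS0 A : is_antichain A -> inS 0 (indicator A).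
Proof.
move=> hA; split=> [x | C [hC _]]; first exact: ler0n.
by rewrite xiplus_indicator addr0 lern1 chain_antichain_card.
Qed.

Lemma inS0_le g C : inS 0 g -> is_max_chain C -> xiplus g C <= g None.
Proof. by move=> [_ hg] /hg; rewrite addr0. Qed.

Lemma tight_chain_split eps f g h C :
  (forall p, f p = g p + h p) -> inS 0 g -> inS eps h ->
  is_max_chain C -> xiplus f C = f None - eps -> xiplus g C = g None.
Proof.
move=> hsum [_ hg] [_ hh] hC; rewrite (xiplus_add C hsum) hsum.
by have := hg C hC; have := hh C hC; lia.
Qed.

Definition min_support f : {set T} :=
  [set x | (0 < f (Some x)) && [forall y, (y < x)%O ==> (f (Some y) == 0)]].

Lemma min_support_antichain f : is_antichain (min_support f).
Proof.
move=> x y; rewrite !inE => /andP[hx _] /andP[_ /forallP hy] hxy.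
apply/eqP; apply: contraT => hne.
have /implyP/(_ _)/eqP hx0 := hy x; rewrite lt_neqAle hne hxy in hx0.
by rewrite hx0 // ltxx in hx.
Qed.

Lemma lowest_positive f C : (exists2 c, c \in C & 0 < f (Some c)) ->
  exists a, [/\ a \in C, 0 < f (Some a) &
    forall c, c \in C -> (c < a)%O -> f (Some c) <= 0].
Proof.
case=> c0 c0C c0pos.
have hS : (c0 \in C) && (0 < f (Some c0)) by rewrite c0C c0pos.
have [a /andP[aC apos] hmin] := @arg_minnP _ c0
  (fun c => (c \in C) && (0 < f (Some c))) (fun c => #|[set y | (y < c)%O]|) hS.
exists a; split=> // c cC hca; rewrite leNgt; apply/negP => cpos.
have := hmin c; rewrite cC cpos => /(_ isT); apply/negP; rewrite -ltnNge.
apply: proper_card; apply/properP; split.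
  by apply/subsetP => y; rewrite !inE => /lt_trans; apply.
by exists c; rewrite !inE ?ltxx.
Qed.

Lemma xiplus_upper_part f C a :
  is_chain C -> a \in C -> (forall c, c \in C -> (c < a)%O -> f (Some c) = 0) ->
  xiplus f C = xiplus f [set c in C | (a <= c)%O].
Proof.
move=> hC aC below0; rewrite /xiplus (bigID (fun c => (a <= c)%O)) /=.
rewrite [X in _ + X]big1 ?addr0; first by apply: eq_bigl => c; rewrite inE.
move=> c /andP[cC hac]; apply: below0 => //.
case: (hC c a cC aC) => // hca; last by rewrite hca in hac.
by rewrite lt_neqAle hca andbT; apply: contraNneq hac => ->.
Qed.

Lemma chain_extend_below C a y :
  is_chain C -> (y < a)%O -> is_chain (y |: [set c in C | (a <= c)%O]).
Proof.
move=> hC hya u v; rewrite !inE.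
move=> /orP[/eqP-> | /andP[uC hu]] /orP[/eqP-> | /andP[vC hv]].
- by left.
- by left; apply: le_trans (ltW hya) hv.
- by right; apply: le_trans (ltW hya) hu.
- exact: hC.
Qed.

Lemma tight_chain_meets_min_support g C :
  inS 0 g -> 0 < g None -> is_max_chain C -> xiplus g C = g None ->
  exists2 a, a \in C & a \in min_support g.
Proof.
move=> hg gpos hC htight; have gge0 := hg.1.
have hpos : exists2 c, c \in C & 0 < g (Some c).
  apply: NNPP => hno; suff : xiplus g C <= 0 by lia.
  by apply: sumr_le0 => c cC; rewrite leNgt; apply/negP => hc; apply: hno; exists c.
have [a [aC apos hlow]] := lowest_positive hpos.
have below0 c : c \in C -> (c < a)%O -> g (Some c) = 0.
  by move=> cC hca; apply/eqP; rewrite eq_le gge0 hlow.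
exists a => //; rewrite inE apos; apply/forallP => y; apply/implyP => hya.
apply: contraT => hy; have ypos : 0 < g (Some y) by rewrite lt_def hy gge0.
set E := [set c in C | (a <= c)%O].
have yE : y \notin E by rewrite inE (lt_geF hya) andbF.
have [C' [hC' hsub]] := ext_max_chain (chain_extend_below hC.1 hya).
have := xiplus_sub hsub gge0; rewrite {1}/xiplus big_setU1 //= -/(xiplus g E).
rewrite -(xiplus_upper_part hC.1 aC below0) htight.
move=> hle; have := le_trans hle (inS0_le hg hC').
by rewrite gerDr leNgt ypos.
Qed.

End ChainsAndAntichains.

Section Generators.
Context {disp : Order.disp_t} {T : finPOrderType disp}.
Variables (eps : int) (xi : option T -> int).

Definition splits : Prop :=
  exists xi1 xi2 : option T -> int,
    [/\ inS 0 xi1, 0 < xi1 None, inS eps xi2 & forall p, xi p = xi1 p + xi2 p].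

Definition covers_tight_chains (A : {set T}) : Prop :=
  forall C : {set T}, is_max_chain C -> xiplus xi C = xi None - eps ->
    exists a : T, C :&: A = [set a] /\ eps < xi (Some a).

Lemma not_generatorP : inS eps xi -> ~ is_generator eps xi <-> splits.
Proof.
move=> hxi; split=> [hng | hs [_ hn] //].
by apply: NNPP => hn; apply: hng.
Qed.

Lemma splitting_gives_antichain :
  splits -> exists A, is_antichain A /\ covers_tight_chains A.
Proof.
case=> xi1 [xi2 [h1 h1pos h2 hsum]].
have hA := @min_support_antichain _ _ xi1.
exists (min_support xi1); split=> // C hC htight.
have := tight_chain_split hsum h1 h2 hC htight.
move=> /(tight_chain_meets_min_support h1 h1pos hC) [a aC aA].
exists a; split.
  apply/eqP; rewrite eq_sym eqEcard sub1set inE aC aA cards1 /=.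
  exact: chain_antichain_card hC.1 hA.
by move: aA; rewrite inE hsum -[eps]add0r => /andP[apos _]; apply: ltr_leD apos (h2.1 a).
Qed.

Lemma subtract_indicator_inS (B : {set T}) :
  inS eps xi -> is_antichain B -> (forall x, x \in B -> eps < xi (Some x)) ->
  (forall C, is_max_chain C -> xiplus xi C = xi None - eps ->
     exists2 a, a \in C & a \in B) ->
  inS eps (fun p => xi p - indicator B p).
Proof.
move=> [hpt hch] hB hBgt hmeet; split=> [x | C hC] /=.
  by case: (boolP (x \in B)) => [/hBgt | _] /=; [lia | rewrite subr0].
have hsplit : xiplus xi C = #|C :&: B|%:R + xiplus (fun p => xi p - indicator B p) C.
  by rewrite -xiplus_indicator; apply: xiplus_add => p; rewrite addrC subrK.
have hle := hch C hC; have hcard := chain_antichain_card hC.1 hB.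
have [hC0 | hCpos] := posnP #|C :&: B|; last first.
  by move: hsplit hle hcard hCpos; move: #|C :&: B| => n; lia.
have hnt : xiplus xi C != xi None - eps.
  apply/eqP => /(hmeet C hC) [a aC aB].
  by move: hC0 => /eqP; rewrite cards_eq0 => /eqP /setP /(_ a); rewrite !inE aC aB.
by move: hsplit hle hnt; rewrite hC0; lia.
Qed.

Lemma antichain_gives_splitting (A : {set T}) :
  inS eps xi -> is_antichain A -> covers_tight_chains A -> splits.
Proof.
move=> hxi hA hcov; set B := [set x in A | eps < xi (Some x)].
have hB : is_antichain B.
  by apply: sub_antichain hA; apply/subsetP => x; rewrite inE => /andP[].
exists (indicator B), (fun p => xi p - indicator B p); split=> //.
- exact: indicator_inS0.
- apply: subtract_indicator_inS => // [x | C hC htight]; first by rewrite inE => /andP[].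
  have [a [hCA hgt]] := hcov C hC htight.
  have : a \in C :&: A by rewrite hCA set11.
  by rewrite inE => /andP[aC aA]; exists a; rewrite // inE aA hgt.
- by move=> p; rewrite addrC subrK.
Qed.

End Generators.

Theorem mainTheorem7 (disp : Order.disp_t) (T : finPOrderType disp)
  (eps : int) (heps : eps = 1 \/ eps = -1)
  (xi : option T -> int) (hxi : inS eps xi) :
  let d := xi None in
  ~ is_generator eps xi <->
  exists A : {set T}, is_antichain A /\
    forall C : {set T}, is_max_chain C -> xiplus xi C = d - eps ->
      exists a : T, C :&: A = [set a] /\ eps < xi (Some a).
Proof.
move=> d; rewrite (not_generatorP hxi); split.
  exact: splitting_gives_antichain.
by case=> A [hA hcov]; apply: antichain_gives_splitting hxi hA hcov.
Qed.
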